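(* Let $X$ and $Y$ be discrete random variables taking values in a finite set $\mathcal{A}$ with $|\mathcal{A}| = M \ge 2$, and suppose $d_{\mathrm{TV}}(X,Y) > 0$. Define $$\alpha \triangleq \frac{d_{\mathrm{loc}}(X,Y)}{d_{\mathrm{TV}}(X,Y)}$$ (so that $\alpha \in [\tfrac{2}{M}, 1]$). Then $$|H(X)-H(Y)| \le d_{\mathrm{TV}}(X,Y)\,\log(M\alpha - 1) + h\bigl(d_{\mathrm{TV}}(X,Y)\bigr).$$ Furthermore, if the probability mass functions satisfy $P_Y(a) \ge \tfrac12 P_X(a)$ and $P_X(a) \ge \tfrac12 P_Y(a)$ for every $a \in \mathcal{A}$ (i.e., $P_X$ and $P_Y$ have the same support and $\tfrac12 \le P_X(a)/P_Y(a) \le 2$ on it), then the bound tightens to $$|H(X)-H(Y)| \le d_{\mathrm{TV}}(X,Y)\,\log\Bigl(\frac{M\alpha - 1}{4}\Bigr) + h\bigl(d_{\mathrm{TV}}(X,Y)\bigr).$$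
   Context: For discrete random variables $X,Y$ on a set $\mathcal{A}$ with probability mass functions $P_X,P_Y$, the local distance is $d_{\mathrm{loc}}(X,Y) = \sup_{u\in\mathcal{A}} |P_X(u)-P_Y(u)|$ and the total variation distance is $d_{\mathrm{TV}}(X,Y) = \frac12\sum_{u\in\mathcal{A}}|P_X(u)-P_Y(u)|$. All logarithms are natural and entropies are in nats: $H(X) = -\sum_u P_X(u)\log P_X(u)$ with $0\log 0 = 0$. $h(x) = -x\log x-(1-x)\log(1-x)$ denotes the binary entropy function on $[0,1]$. *)

From Stdlib Require Import Reals List.
Open Scope R_scope.

(* The finite alphabet A with |A| = M is modelled as {0, ..., M-1}. *)
Definition sumR (M : nat) (f : nat -> R) : R :=
  fold_right Rplus 0 (map f (seq 0 M)).

Definition is_pmf (M : nat) (P : nat -> R) : Prop :=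
  (forall i, (i < M)%nat -> 0 <= P i) /\ sumR M P = 1.

(* local distance: max over the alphabet of |P u - Q u| (values are >= 0,
   so starting the fold at 0 is harmless). *)
Definition dloc (M : nat) (P Q : nat -> R) : R :=
  fold_right Rmax 0 (map (fun i => Rabs (P i - Q i)) (seq 0 M)).

Definition dTV (M : nat) (P Q : nat -> R) : R :=
  / 2 * sumR M (fun i => Rabs (P i - Q i)).

(* - x log x, with 0 log 0 = 0 (natural log, nats). *)
Definition negxlogx (x : R) : R :=
  if Rlt_dec 0 x then - (x * ln x) else 0.

Definition entropy (M : nat) (P : nat -> R) : R :=
  sumR M (fun i => negxlogx (P i)).

Definition hbin (x : R) : R := negxlogx x + negxlogx (1 - x).

(* Write P = m + p and Q = m + q with m = min(P, Q) the overlap and p, q >= 0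
   the excesses; p and q have disjoint supports, sum p = sum q = d = dTV and
   sum m = 1 - d, and every p_i, q_i is at most D = dloc.  Pointwise,
     eta(m+p) - eta(m+q) <= 1[p>0]/t + (ln t - 1 - c) p + (ln D - ln d) q
                            - ln(1-d) m                 (eta x = - x ln x)
   follows from subadditivity of eta (with a gain c = 2 ln 2 when p <= m),
   the Gibbs inequality for the pair (m, q), ln u <= u - 1, and q <= D.
   Summing with t = k/d, where k is the size of the support of p, gives
     H(P) - H(Q) <= d ln(k D / d) + h(d) - c d,
   and disjointness of supports gives k D <= M D - d, i.e. k D / d <= M alpha - 1.
   The file develops finite sums, elementary logarithm inequalities, the
   inequalities for eta, the overlap/excess decomposition, the one-sided
   bound, and finally Theorem 4 by applying the one-sided bound in both
   directions (c = 0 for the general bound, c = 2 ln 2 under the ratio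
   condition, where ln((x)/4) = ln x - 2 ln 2). *)

From Stdlib Require Import Reals List Lra Lia.
Open Scope R_scope.

Lemma sumR_S (M : nat) (f : nat -> R) : sumR (S M) f = sumR M f + f M.
Proof.
  unfold sumR. rewrite seq_S, map_app, fold_right_app. simpl.
  generalize (map f (seq 0 M)). intros l. induction l; simpl; lra.
Qed.

Lemma sumR_0 (f : nat -> R) : sumR 0 f = 0.
Proof. reflexivity. Qed.

Lemma sumR_le (M : nat) (f g : nat -> R) :
  (forall i, (i < M)%nat -> f i <= g i) -> sumR M f <= sumR M g.
Proof.
  induction M as [|M IH]; intros H; [rewrite !sumR_0; lra|].
  rewrite !sumR_S.
  assert (f M <= g M) by (apply H; lia).
  assert (sumR M f <= sumR M g) by (apply IH; intros; apply H; lia).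
  lra.
Qed.

Lemma sumR_ext (M : nat) (f g : nat -> R) :
  (forall i, (i < M)%nat -> f i = g i) -> sumR M f = sumR M g.
Proof.
  intros H; apply Rle_antisym; apply sumR_le; intros i Hi; rewrite (H i Hi); lra.
Qed.

Lemma sumR_plus (M : nat) (f g : nat -> R) :
  sumR M (fun i => f i + g i) = sumR M f + sumR M g.
Proof. induction M; [rewrite !sumR_0; lra|]. rewrite !sumR_S, IHM; lra. Qed.

Lemma sumR_minus (M : nat) (f g : nat -> R) :
  sumR M (fun i => f i - g i) = sumR M f - sumR M g.
Proof. induction M; [rewrite !sumR_0; lra|]. rewrite !sumR_S, IHM; lra. Qed.

Lemma sumR_scal (M : nat) (c : R) (f : nat -> R) :
  sumR M (fun i => c * f i) = c * sumR M f.
Proof. induction M; [rewrite !sumR_0; lra|]. rewrite !sumR_S, IHM; lra. Qed.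

Lemma sumR_const (M : nat) (c : R) : sumR M (fun _ => c) = INR M * c.
Proof. induction M; [rewrite sumR_0; simpl; lra|]. rewrite sumR_S, IHM, S_INR; lra. Qed.

Lemma sumR_nonneg (M : nat) (f : nat -> R) :
  (forall i, (i < M)%nat -> 0 <= f i) -> 0 <= sumR M f.
Proof.
  intros H. rewrite <- (Rmult_0_r (INR M)), <- sumR_const. apply sumR_le; auto.
Qed.

Lemma sumR_term_le (M : nat) (f : nat -> R) (j : nat) :
  (forall i, (i < M)%nat -> 0 <= f i) -> (j < M)%nat -> f j <= sumR M f.
Proof.
  induction M as [|M IH]; intros H Hj; [lia|].
  rewrite sumR_S.
  assert (0 <= sumR M f) by (apply sumR_nonneg; intros; apply H; lia).
  destruct (Nat.eq_dec j M) as [->|Hne]; [lra|].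
  assert (f j <= sumR M f) by (apply IH; [intros; apply H|]; lia).
  assert (0 <= f M) by (apply H; lia).
  lra.
Qed.

Lemma dTV_sym (M : nat) (P Q : nat -> R) : dTV M Q P = dTV M P Q.
Proof.
  unfold dTV, sumR. do 2 f_equal. apply map_ext. intros; apply Rabs_minus_sym.
Qed.

Lemma dloc_sym (M : nat) (P Q : nat -> R) : dloc M Q P = dloc M P Q.
Proof. unfold dloc. f_equal. apply map_ext. intros; apply Rabs_minus_sym. Qed.

Lemma fold_Rmax_ge (l : list R) (x : R) : In x l -> x <= fold_right Rmax 0 l.
Proof.
  induction l as [|y l IH]; simpl; [tauto|]. intros [<-|H].
  - apply Rmax_l.
  - eapply Rle_trans; [apply IH; auto|apply Rmax_r].
Qed.

Lemma dloc_ge (M : nat) (P Q : nat -> R) (i : nat) :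
  (i < M)%nat -> Rabs (P i - Q i) <= dloc M P Q.
Proof.
  intros Hi. apply fold_Rmax_ge, in_map_iff.
  exists i; split; [reflexivity|]. apply in_seq; lia.
Qed.

(* Elementary logarithm inequalities (Stdlib's ln is 0 on nonpositive reals). *)

Lemma ln_le_mono (x y : R) : 0 < x -> x <= y -> ln x <= ln y.
Proof. intros Hx [H|<-]; [left; apply ln_increasing; auto|lra]. Qed.

Lemma ln_le_sub1 (u : R) : 0 < u -> ln u <= u - 1.
Proof. intros Hu. pose proof (exp_ineq1_le (ln u)). rewrite exp_ln in H; lra. Qed.

Lemma ln_nonpos (x : R) : x <= 1 -> ln x <= 0.
Proof.
  intros H. destruct (Rlt_dec 0 x) as [Hx|Hx].
  - rewrite <- ln_1. apply ln_le_mono; lra.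
  - unfold ln. destruct (Rlt_dec 0 x); [contradiction|lra].
Qed.

(* Concavity of ln(1 + t) on [0, 1]: the chord through t = 0 and t = 1.
   Proved by convexity of exp: exp(t ln 2) lies below the chord 1 + t. *)
Lemma ln_1plus_ge_chord (t : R) : 0 <= t <= 1 -> t * ln 2 <= ln (1 + t).
Proof.
  intros Ht. set (z := t * ln 2).
  assert (E1 : 1 + (ln 2 - z) <= exp (ln 2 - z)) by apply exp_ineq1_le.
  assert (E2 : 1 + (0 - z) <= exp (0 - z)) by apply exp_ineq1_le.
  assert (X1 : 2 = exp z * exp (ln 2 - z)).
  { rewrite <- exp_plus, Rplus_minus, exp_ln; lra. }
  assert (X2 : 1 = exp z * exp (0 - z)).
  { rewrite <- exp_plus, Rplus_minus, exp_0; lra. }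
  assert (Ez : 0 < exp z) by apply exp_pos.
  (* Weighting the tangent-line inequalities at z by t and 1 - t: *)
  assert (A1 : 0 <= t * (exp z * (exp (ln 2 - z) - (1 + (ln 2 - z))))).
  { apply Rmult_le_pos; [lra|]. apply Rmult_le_pos; lra. }
  assert (A2 : 0 <= (1 - t) * (exp z * (exp (0 - z) - (1 + (0 - z))))).
  { apply Rmult_le_pos; [lra|]. apply Rmult_le_pos; lra. }
  assert (exp z <= 1 + t) by (unfold z in *; nra).
  rewrite <- (ln_exp z). apply ln_le_mono; auto.
Qed.

Definition indR (x : R) : R := if Rlt_dec 0 x then 1 else 0.

Lemma indR_range (x : R) : 0 <= indR x <= 1.
Proof. unfold indR. destruct (Rlt_dec 0 x); lra. Qed.

Lemma indR_le (x D : R) : 0 <= x -> x <= D -> x <= indR x * D.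
Proof. intros. unfold indR. destruct (Rlt_dec 0 x); lra. Qed.

Lemma negxlogx_0 : negxlogx 0 = 0.
Proof. unfold negxlogx; destruct (Rlt_dec 0 0); lra. Qed.

Lemma negxlogx_eq (x : R) : 0 <= x -> negxlogx x = - (x * ln x).
Proof.
  intros [H|<-]; unfold negxlogx; destruct (Rlt_dec 0 _); lra.
Qed.

Lemma negxlogx_subadd (m p : R) :
  0 <= m -> 0 <= p -> negxlogx (m + p) <= negxlogx m + negxlogx p.
Proof.
  intros [Hm|<-] [Hp|<-]; rewrite ?Rplus_0_l, ?Rplus_0_r, ?negxlogx_0; try lra.
  rewrite !negxlogx_eq by lra.
  assert (ln m <= ln (m + p)) by (apply ln_le_mono; lra).
  assert (ln p <= ln (m + p)) by (apply ln_le_mono; lra).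
  nra.
Qed.

(* Subadditivity with a gain 2 ln 2 * p when the smaller summand is p:
   ln(m+p) >= ln(2p) and ln(m+p) = ln m + ln(1 + p/m) >= ln m + (p/m) ln 2. *)
Lemma negxlogx_subadd_gain (m p : R) :
  0 <= p -> p <= m -> negxlogx (m + p) <= negxlogx m + negxlogx p - 2 * ln 2 * p.
Proof.
  intros [Hp|<-] Hpm; [|rewrite Rplus_0_r, negxlogx_0; lra].
  rewrite !negxlogx_eq by lra.
  assert (H2p : ln 2 + ln p <= ln (m + p)).
  { rewrite <- ln_mult by lra. apply ln_le_mono; lra. }
  assert (Hr : 0 < p / m <= 1).
  { split; [apply Rdiv_lt_0_compat; lra|].
    apply Rmult_le_reg_r with m; [lra|]. field_simplify; lra. }
  assert (Hsplit : ln (m + p) = ln m + ln (1 + p / m)).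
  { rewrite <- ln_mult by lra. f_equal. field. lra. }
  assert (Hchord : m * (p / m * ln 2) <= m * ln (1 + p / m)).
  { apply Rmult_le_compat_l; [lra|]. apply ln_1plus_ge_chord; lra. }
  replace (m * (p / m * ln 2)) with (p * ln 2) in Hchord by (field; lra).
  nra.
Qed.

Lemma negxlogx_gibbs (m q a b : R) :
  0 <= m -> 0 <= q -> m <= a -> q <= b -> a + b <= 1 ->
  negxlogx m + negxlogx q - negxlogx (m + q) <= m * (- ln a) + q * (- ln b).
Proof.
  intros Hm Hq Hma Hqb Hab.
  assert (La : ln a <= 0) by (apply ln_nonpos; lra).
  assert (Lb : ln b <= 0) by (apply ln_nonpos; lra).
  destruct Hm as [Hm|<-]; [|rewrite Rplus_0_l, negxlogx_0; nra].
  destruct Hq as [Hq|<-]; [|rewrite Rplus_0_r, negxlogx_0; nra].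
  rewrite !negxlogx_eq by lra.
  assert (Ua : ln (a * (m + q) / m) <= a * (m + q) / m - 1)
    by (apply ln_le_sub1; apply Rdiv_lt_0_compat; nra).
  assert (Ub : ln (b * (m + q) / q) <= b * (m + q) / q - 1)
    by (apply ln_le_sub1; apply Rdiv_lt_0_compat; nra).
  unfold Rdiv in Ua, Ub.
  rewrite !ln_mult, ln_Rinv in Ua, Ub by (try apply Rinv_0_lt_compat; nra).
  apply (Rmult_le_compat_l m) in Ua; [|lra].
  apply (Rmult_le_compat_l q) in Ub; [|lra].
  replace (m * (a * (m + q) * / m - 1)) with (a * (m + q) - m) in Ua by (field; lra).
  replace (q * (b * (m + q) * / q - 1)) with (b * (m + q) - q) in Ub by (field; lra).
  nra.
Qed.

(* Tangent-line bound on eta, charging 1/t for each point of the support: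
   from ln(1/(t p)) <= 1/(t p) - 1. *)
Lemma negxlogx_le_support (p t : R) :
  0 <= p -> 0 < t -> negxlogx p <= indR p / t - p + p * ln t.
Proof.
  intros [Hp|<-] Ht; unfold indR.
  - destruct (Rlt_dec 0 p); [|lra]. rewrite negxlogx_eq by lra.
    assert (U : ln (/ (t * p)) <= / (t * p) - 1)
      by (apply ln_le_sub1; apply Rinv_0_lt_compat; nra).
    rewrite ln_Rinv, ln_mult in U by nra.
    apply (Rmult_le_compat_l p) in U; [|lra].
    replace (p * (/ (t * p) - 1)) with (1 / t - p) in U by (field; lra).
    lra.
  - destruct (Rlt_dec 0 0); [lra|]. rewrite negxlogx_0. unfold Rdiv. lra.
Qed.

Lemma negxlogx_ge_bounded (q D : R) :
  0 <= q -> q <= D -> q * (- ln D) <= negxlogx q.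
Proof.
  intros [Hq|<-] HqD; [|rewrite negxlogx_0; lra].
  rewrite negxlogx_eq by lra. assert (ln q <= ln D) by (apply ln_le_mono; lra). nra.
Qed.

Lemma pointwise_entropy_gap (m p q a b t D c : R) :
  0 <= m -> 0 <= p -> 0 <= q -> m <= a -> q <= b -> a + b <= 1 ->
  q <= D -> 0 < t ->
  negxlogx (m + p) <= negxlogx m + negxlogx p - c * p ->
  negxlogx (m + p) - negxlogx (m + q)
    <= indR p / t + (ln t - 1 - c) * p + (ln D - ln b) * q - ln a * m.
Proof.
  intros Hm Hp Hq Hma Hqb Hab HqD Ht Hsplit.
  pose proof (negxlogx_gibbs m q a b Hm Hq Hma Hqb Hab).
  pose proof (negxlogx_le_support p t Hp Ht).
  pose proof (negxlogx_ge_bounded q D Hq HqD).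
  nra.
Qed.

Definition overlap (P Q : nat -> R) (i : nat) : R := Rmin (P i) (Q i).
Definition excess (P Q : nat -> R) (i : nat) : R := P i - Rmin (P i) (Q i).

Definition excess_support (M : nat) (P Q : nat -> R) : R :=
  sumR M (fun i => indR (excess P Q i)).

Lemma overlap_excess (P Q : nat -> R) (i : nat) : P i = overlap P Q i + excess P Q i.
Proof. unfold overlap, excess. ring. Qed.

Lemma overlap_sym (P Q : nat -> R) (i : nat) : overlap Q P i = overlap P Q i.
Proof. apply Rmin_comm. Qed.

Lemma excess_nonneg (P Q : nat -> R) (i : nat) : 0 <= excess P Q i.
Proof. unfold excess. pose proof (Rmin_l (P i) (Q i)). lra. Qed.

Lemma overlap_nonneg (P Q : nat -> R) (i : nat) :
  0 <= P i -> 0 <= Q i -> 0 <= overlap P Q i.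
Proof. intros. unfold overlap. apply Rmin_glb; auto. Qed.

Lemma excess_add (P Q : nat -> R) (i : nat) :
  excess P Q i + excess Q P i = Rabs (P i - Q i).
Proof.
  unfold excess. rewrite (Rmin_comm (Q i)).
  destruct (Rle_dec (P i) (Q i)).
  - rewrite Rmin_left, Rabs_left1 by lra. ring.
  - rewrite Rmin_right, Rabs_right by lra. ring.
Qed.

Lemma excess_disjoint (P Q : nat -> R) (i : nat) :
  indR (excess P Q i) + indR (excess Q P i) <= 1.
Proof.
  unfold excess. rewrite (Rmin_comm (Q i)). unfold indR.
  destruct (Rle_dec (P i) (Q i)).
  - rewrite Rmin_left by lra. destruct (Rlt_dec 0 (P i - P i)); [lra|].
    destruct (Rlt_dec 0 _); lra.
  - rewrite Rmin_right by lra. destruct (Rlt_dec 0 (Q i - Q i)); [lra|].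
    destruct (Rlt_dec 0 _); lra.
Qed.

Lemma excess_le_dloc (M : nat) (P Q : nat -> R) (i : nat) :
  (i < M)%nat -> excess P Q i <= dloc M P Q.
Proof.
  intros Hi. pose proof (excess_add P Q i). pose proof (excess_nonneg Q P i).
  pose proof (dloc_ge M P Q i Hi). lra.
Qed.

Section Decomposition.

Variables (M : nat) (P Q : nat -> R).
Hypotheses (hP : is_pmf M P) (hQ : is_pmf M Q).

Lemma sum_excess : sumR M (excess P Q) = dTV M P Q.
Proof.
  destruct hP as [_ HP1], hQ as [_ HQ1].
  assert (Hadd : sumR M (excess P Q) + sumR M (excess Q P) = 2 * dTV M P Q).
  { rewrite <- sumR_plus. unfold dTV.
    rewrite (sumR_ext M _ (fun i => Rabs (P i - Q i))) by (intros; apply excess_add).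
    lra. }
  assert (Hsub : sumR M (excess P Q) - sumR M (excess Q P) = 0).
  { rewrite <- sumR_minus, (sumR_ext M _ (fun i => P i - Q i)).
    - rewrite sumR_minus. lra.
    - intros i _. unfold excess. rewrite Rmin_comm. ring. }
  lra.
Qed.

Lemma sum_overlap : sumR M (overlap P Q) = 1 - dTV M P Q.
Proof.
  destruct hP as [_ HP1].
  rewrite <- sum_excess, <- HP1, <- sumR_minus.
  apply sumR_ext. intros i _. rewrite (overlap_excess P Q i). ring.
Qed.

Lemma dTV_le_1 : dTV M P Q <= 1.
Proof.
  destruct hP as [HP0 _], hQ as [HQ0 _].
  assert (0 <= sumR M (overlap P Q)).
  { apply sumR_nonneg. intros. apply overlap_nonneg; auto. }
  rewrite sum_overlap in H. lra.
Qed.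

(* The excess of P, of total mass dTV, lives on excess_support points where
   it is at most dloc. *)
Lemma dTV_le_support_dloc : dTV M P Q <= excess_support M P Q * dloc M P Q.
Proof.
  rewrite <- sum_excess. unfold excess_support.
  rewrite Rmult_comm, <- sumR_scal. apply sumR_le. intros i Hi.
  rewrite Rmult_comm. apply indR_le; [apply excess_nonneg|apply excess_le_dloc; auto].
Qed.

End Decomposition.

(* Disjointness of the supports of the two excesses: k_P + k_Q <= M, and
   d <= k_Q D, so k_P D <= M D - d; the ratio k_P D / d is therefore
   positive and at most M alpha - 1. *)
Lemma support_dloc_ratio (M : nat) (P Q : nat -> R) :
  is_pmf M P -> is_pmf M Q -> 0 < dTV M P Q ->
  0 < excess_support M P Q * dloc M P Q / dTV M P Q
    <= INR M * (dloc M P Q / dTV M P Q) - 1.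
Proof.
  intros hP hQ Hd.
  set (d := dTV M P Q) in *. set (D := dloc M P Q).
  assert (HkP : d <= excess_support M P Q * D) by (apply dTV_le_support_dloc; auto).
  assert (HkQ : d <= excess_support M Q P * D).
  { unfold d, D. rewrite <- dTV_sym, <- dloc_sym. apply dTV_le_support_dloc; auto. }
  assert (Hkk : excess_support M P Q + excess_support M Q P <= INR M).
  { unfold excess_support. rewrite <- sumR_plus, <- (Rmult_1_r (INR M)), <- sumR_const.
    apply sumR_le. intros; apply excess_disjoint. }
  assert (Hk0 : 0 <= excess_support M P Q).
  { apply sumR_nonneg. intros; apply indR_range. }
  assert (HD : 0 < D) by nra.
  split; [apply Rdiv_lt_0_compat; lra|].
  apply Rmult_le_reg_r with d; [lra|]. unfold Rdiv.
  replace (excess_support M P Q * D * / d * d) with (excess_support M P Q * D)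
    by (field; lra).
  replace ((INR M * (D * / d) - 1) * d) with (INR M * D - d) by (field; lra).
  nra.
Qed.

Section OneSidedBound.

Variables (M : nat) (P Q : nat -> R).
Hypotheses (hP : is_pmf M P) (hQ : is_pmf M Q).

Definition split_gain (c : R) : Prop :=
  forall i, (i < M)%nat ->
    negxlogx (P i)
      <= negxlogx (overlap P Q i) + negxlogx (excess P Q i) - c * excess P Q i.

Lemma split_gain_0 : split_gain 0.
Proof.
  destruct hP as [HP0 _], hQ as [HQ0 _].
  intros i Hi. rewrite Rmult_0_l, Rminus_0_r, (overlap_excess P Q i).
  apply negxlogx_subadd; [apply overlap_nonneg; auto|apply excess_nonneg].
Qed.

(* Under Q >= P/2 the excess P - Q (where positive) is at most Q = overlap. *)
Lemma split_gain_2ln2 :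
  (forall i, (i < M)%nat -> Q i >= / 2 * P i) -> split_gain (2 * ln 2).
Proof.
  intros Hratio i Hi. rewrite (overlap_excess P Q i) at 1.
  apply negxlogx_subadd_gain; [apply excess_nonneg|].
  specialize (Hratio i Hi). unfold overlap, excess.
  destruct (Rle_dec (P i) (Q i)).
  - rewrite Rmin_left by lra. destruct hP as [HP0 _]. specialize (HP0 i Hi). lra.
  - rewrite Rmin_right by lra. lra.
Qed.

Lemma entropy_gap_support (c : R) :
  0 < dTV M P Q -> split_gain c ->
  entropy M P - entropy M Q
    <= dTV M P Q * ln (excess_support M P Q * dloc M P Q / dTV M P Q)
       + hbin (dTV M P Q) - c * dTV M P Q.
Proof.
  intros Hd Hgain.
  destruct hP as [HP0 _], hQ as [HQ0 _].
  set (d := dTV M P Q) in *. set (D := dloc M P Q).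
  set (k := excess_support M P Q).
  destruct (support_dloc_ratio M P Q hP hQ Hd) as [Hratio _]. fold d D k in Hratio.
  assert (Hd1 : d <= 1) by (apply dTV_le_1; auto).
  assert (HkD : d <= k * D) by (apply dTV_le_support_dloc; auto).
  assert (Hk0 : 0 <= k) by (apply sumR_nonneg; intros; apply indR_range).
  assert (Hk : 0 < k).
  { destruct Hk0 as [Hk|Hk]; auto. rewrite <- Hk in HkD. lra. }
  set (t := k / d). assert (Ht : 0 < t) by (apply Rdiv_lt_0_compat; lra).
  set (g := fun i => indR (excess P Q i) / t + (ln t - 1 - c) * excess P Q i
                     + (ln D - ln d) * excess Q P i - ln (1 - d) * overlap P Q i).
  assert (Hpoint : forall i, (i < M)%nat ->
                     negxlogx (P i) - negxlogx (Q i) <= g i).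
  { intros i Hi.
    assert (Hm : 0 <= overlap P Q i) by (apply overlap_nonneg; auto).
    rewrite (overlap_excess P Q i), (overlap_excess Q P i), (overlap_sym P Q i).
    apply pointwise_entropy_gap; auto using excess_nonneg; try lra.
    - unfold d. rewrite <- (sum_overlap M P Q) by auto. apply sumR_term_le; auto.
      intros; apply overlap_nonneg; auto.
    - unfold d. rewrite <- dTV_sym, <- (sum_excess M Q P) by auto.
      apply sumR_term_le; auto. intros; apply excess_nonneg.
    - unfold D. rewrite <- dloc_sym. apply excess_le_dloc; auto.
    - rewrite <- overlap_excess. apply Hgain; auto. }
  assert (Hsum : entropy M P - entropy M Q <= sumR M g).
  { unfold entropy. rewrite <- sumR_minus. apply sumR_le; auto. }
  assert (Hsum_g : sumR M g = d * ln (k * D / d) + hbin d - c * d).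
  { unfold g. rewrite !sumR_minus, !sumR_plus, !sumR_scal.
    unfold Rdiv at 1. rewrite (sumR_ext M _ (fun i => / t * indR (excess P Q i)))
      by (intros; ring).
    rewrite sumR_scal. change (sumR M (fun i => indR (excess P Q i))) with k.
    rewrite (sum_overlap M P Q), (sum_excess M P Q), (sum_excess M Q P),
      (dTV_sym M P Q) by auto.
    fold d.
    unfold hbin. rewrite !negxlogx_eq by lra.
    replace (k * D / d) with (t * D) by (unfold t; field; lra).
    rewrite ln_mult by nra. unfold t. field. lra. }
  lra.
Qed.

Lemma entropy_gap_alpha (c : R) :
  0 < dTV M P Q -> split_gain c ->
  entropy M P - entropy M Q
    <= dTV M P Q * ln (INR M * (dloc M P Q / dTV M P Q) - 1)
       + hbin (dTV M P Q) - c * dTV M P Q.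
Proof.
  intros Hd Hgain.
  pose proof (entropy_gap_support c Hd Hgain).
  destruct (support_dloc_ratio M P Q hP hQ Hd) as [Hpos Hle].
  assert (ln (excess_support M P Q * dloc M P Q / dTV M P Q)
          <= ln (INR M * (dloc M P Q / dTV M P Q) - 1)) by (apply ln_le_mono; auto).
  nra.
Qed.

End OneSidedBound.

Theorem theorem4 (M : nat) (P Q : nat -> R)
  (hM : (2 <= M)%nat) (hP : is_pmf M P) (hQ : is_pmf M Q)
  (hTV : 0 < dTV M P Q) :
  let alpha := dloc M P Q / dTV M P Q in
  Rabs (entropy M P - entropy M Q)
    <= dTV M P Q * ln (INR M * alpha - 1) + hbin (dTV M P Q)
  /\
  ((forall a, (a < M)%nat -> Q a >= / 2 * P a /\ P a >= / 2 * Q a) ->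
   Rabs (entropy M P - entropy M Q)
    <= dTV M P Q * ln ((INR M * alpha - 1) / 4) + hbin (dTV M P Q)).
Proof.
  intros alpha. unfold alpha.
  pose proof (entropy_gap_alpha M Q P hQ hP) as Hswap.
  rewrite dTV_sym, dloc_sym in Hswap.
  split.
  - pose proof (entropy_gap_alpha M P Q hP hQ 0 hTV (split_gain_0 M P Q hP hQ)).
    pose proof (Hswap 0 hTV (split_gain_0 M Q P hQ hP)).
    apply Rabs_le. lra.
  - intros Hratio.
    pose proof (entropy_gap_alpha M P Q hP hQ (2 * ln 2) hTV
                  (split_gain_2ln2 M P Q hP (fun a Ha => proj1 (Hratio a Ha)))).
    pose proof (Hswap (2 * ln 2) hTV
                  (split_gain_2ln2 M Q P hQ (fun a Ha => proj2 (Hratio a Ha)))).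
    destruct (support_dloc_ratio M P Q hP hQ hTV) as [Hpos Hle].
    assert (Hquarter : ln ((INR M * (dloc M P Q / dTV M P Q) - 1) / 4)
                       = ln (INR M * (dloc M P Q / dTV M P Q) - 1) - 2 * ln 2).
    { unfold Rdiv at 1. rewrite ln_mult, ln_Rinv by lra.
      replace 4 with (2 * 2) by ring. rewrite ln_mult by lra. ring. }
    rewrite Hquarter. apply Rabs_le. lra.
Qed.
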